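(* Let $\mathbf{M}^*\in\mathbb{R}^{d_1\times d_2}$ have rank $r$, and let $f(\mathbf{U},\mathbf{V})=\frac12\|\mathbf{U}\mathbf{V}^\top-\mathbf{M}^*\|_F^2$ for $\mathbf{U}\in\mathbb{R}^{d_1\times r}$, $\mathbf{V}\in\mathbb{R}^{d_2\times r}$. Let $0<\epsilon<\|\mathbf{M}^*\|_F$ and $d=\max\{d_1,d_2\}$. Suppose the entries of $\mathbf{U}_0$ and $\mathbf{V}_0$ are drawn i.i.d. from $\mathcal{N}(0,\frac{\epsilon}{\mathrm{poly}(d)})$ (with a sufficiently large polynomial in $d$), and run gradient descent $$\mathbf{U}_{t+1}=\mathbf{U}_t-\eta_t(\mathbf{U}_t\mathbf{V}_t^\top-\mathbf{M}^* )\mathbf{V}_t,\qquad \mathbf{V}_{t+1}=\mathbf{V}_t-\eta_t(\mathbf{U}_t\mathbf{V}_t^\top-\mathbf{M}^* )^\top\mathbf{U}_t$$ with step sizes $\eta_t=\frac{\sqrt{\epsilon/r}}{100(t+1)\|\mathbf{M}^*\|_F^{3/2}}$, $t=0,1,\dots$. Then with high probability over the initialization $(\mathbf{U}_0,\mathbf{V}_0)$, for all $t$: (i) $\|\mathbf{U}_t^\top\mathbf{U}_t-\mathbf{V}_t^\top\mathbf{V}_t\|_F\le\epsilon$; (ii) $f(\mathbf{U}_t,\mathbf{V}_t)\le f(\mathbf{U}_{t-1},\mathbf{V}_{t-1})\le\cdots\le f(\mathbf{U}_0,\mathbf{V}_0)\le 2\|\mathbf{M}^*\|_F^2$; (iii)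 $\|\mathbf{U}_t\|_F^2\le 5\sqrt{r}\|\mathbf{M}^*\|_F$ and $\|\mathbf{V}_t\|_F^2\le 5\sqrt{r}\|\mathbf{M}^*\|_F$.
   Context: $\|\cdot\|_F$ is the Frobenius norm. *)

From HB Require Import structures.
From mathcomp Require Import all_boot all_order all_algebra.
From mathcomp Require Import all_classical all_reals all_analysis.
Set Implicit Arguments. Unset Strict Implicit. Unset Printing Implicit Defensive.
Import Order.TTheory GRing.Theory Num.Theory.
Local Open Scope classical_set_scope.
Local Open Scope ring_scope.

Section Defs.
Variable R : realType.

Definition frob (m n : nat) (A : 'M[R]_(m, n)) : R :=
  Num.sqrt (\sum_(i < m) \sum_(j < n) A i j ^+ 2).

Definition fobj (d1 d2 r : nat) (M : 'M[R]_(d1, d2))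
  (U : 'M[R]_(d1, r)) (V : 'M[R]_(d2, r)) : R :=
  (frob (U *m V^T - M)) ^+ 2 / 2.

Definition gd_step (d1 d2 r : nat) (M : 'M[R]_(d1, d2)) (eta : R)
  (UV : 'M[R]_(d1, r) * 'M[R]_(d2, r)) : 'M[R]_(d1, r) * 'M[R]_(d2, r) :=
  let U := UV.1 in let V := UV.2 in
  (U - eta *: ((U *m V^T - M) *m V), V - eta *: ((U *m V^T - M)^T *m U)).

Fixpoint gd (d1 d2 r : nat) (M : 'M[R]_(d1, d2)) (eta : nat -> R)
  (U0 : 'M[R]_(d1, r)) (V0 : 'M[R]_(d2, r)) (t : nat)
  : 'M[R]_(d1, r) * 'M[R]_(d2, r) :=
  match t with
  | 0 => (U0, V0)
  | t'.+1 => gd_step M (eta t') (gd M eta U0 V0 t')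
  end.

Definition step_size (d1 d2 : nat) (M : 'M[R]_(d1, d2)) (eps : R) (r : nat)
  (t : nat) : R :=
  Num.sqrt (eps / r%:R) / (100 * (t.+1)%:R * (frob M * Num.sqrt (frob M))).

Definition init_entries (T : Type) (d1 d2 r : nat)
  (U0 : T -> 'M[R]_(d1, r)) (V0 : T -> 'M[R]_(d2, r))
  (k : ('I_d1 * 'I_r + 'I_d2 * 'I_r)%type) (w : T) : R :=
  match k with
  | inl ij => U0 w ij.1 ij.2
  | inr ij => V0 w ij.1 ij.2
  end.

(* A finite family X of real random variables is i.i.d. N(0, s^2):
   each is measurable, has law N(0, s^2), and they are mutually independent
   (product rule for every family of Borel sets, which for a finite index
   set is equivalent to mutual independence). *)
Definition iid_normal (dT : measure_display) (T : measurableType dT)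
  (P : probability T R) (I : finType) (X : I -> T -> R) (s : R) : Prop :=
  (forall k, measurable_fun setT (X k)) /\
  (forall k (B : set R), measurable B ->
      P (X k @^-1` B) = normal_prob 0 s B) /\
  (forall B : I -> set R, (forall k, measurable (B k)) ->
      P (\bigcap_(k in [set: I]) (X k @^-1` B k)) =
      (\prod_(k : I) P (X k @^-1` B k))%E).

End Defs.

(* Write E = U V^T - M and mu = ||M||_F.
   As long as ||E||^2 <= 4 mu^2 and the imbalance U^T U - V^T V has norm at
   most mu, the identity ||U^T U||^2 = <U^T U, V^T V> + <U^T U, U^T U - V^T V>
   gives ||U^T U|| <= 4 mu, hence ||U||^2, ||V||^2 <= 5 sqrt r mu.  With these
   bounds, one gradient step with eta_t (||U||^2 + mu) small decreases the loss,
   because the first-order term -2 eta (||E V||^2 + ||E^T U||^2) dominates the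
   higher-order ones, and it changes the imbalance by exactly
   eta^2 ((E V)^T E V - (E^T U)^T E^T U), which is summable since eta_t ~ 1/t.
   The iteration therefore only needs ||U_0||^2, ||V_0||^2 <= eps / 4, which
   holds when every entry lies in [-b, b] for b^2 = eps / (4 d^2).  Comparing the
   N(0, s^2) density with exp(-x^2 / 2 b^2) shows that an entry leaves [-b, b]
   with probability at most 2 s^2 / b^2, and by independence and Bernoulli's
   inequality all d1 r + d2 r entries stay in [-b, b] with probability at least
   1 - delta once s^2 <= eps / (C d^4). *)

From HB Require Import structures.
From mathcomp Require Import all_boot all_order all_algebra.
From mathcomp Require Import all_classical all_reals all_analysis.
From mathcomp Require Import ring lra measurable_realfun.
Set Implicit Arguments. Unset Strict Implicit. Unset Printing Implicit Defensive.
Import Order.TTheory GRing.Theory Num.Theory.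
Local Open Scope classical_set_scope.
Local Open Scope ring_scope.

Section FrobeniusInnerProduct.
Variable R : realDomainType.
Implicit Types (m n p : nat).

Definition frobdot m n (A B : 'M[R]_(m, n)) : R := \tr (A^T *m B).
Definition frobsq m n (A : 'M[R]_(m, n)) : R := frobdot A A.

Lemma sum_mul_sqr_le (I : finType) (a b : I -> R) :
  (\sum_i a i * b i) ^+ 2 <= (\sum_i a i ^+ 2) * (\sum_i b i ^+ 2).
Proof.
have lagrange : \sum_i \sum_j (a i * b j - a j * b i) ^+ 2 =
    2 * ((\sum_i a i ^+ 2) * (\sum_i b i ^+ 2) - (\sum_i a i * b i) ^+ 2).
  transitivity (\sum_i \sum_j (a i ^+ 2 * b j ^+ 2) + \sum_i \sum_j (b i ^+ 2 * a j ^+ 2)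
                - 2 * \sum_i \sum_j (a i * b i) * (a j * b j)).
    rewrite mulr_sumr -big_split -sumrB /=; apply: eq_bigr => i _.
    by rewrite mulr_sumr -big_split -sumrB /=; apply: eq_bigr => j _; ring.
  by rewrite -!big_distrlr /= expr2; ring.
have : 0 <= \sum_i \sum_j (a i * b j - a j * b i) ^+ 2.
  by apply: sumr_ge0 => i _; apply: sumr_ge0 => j _; apply: sqr_ge0.
rewrite lagrange; lra.
Qed.

Lemma frobdotE m n (A B : 'M[R]_(m, n)) :
  frobdot A B = \sum_i \sum_j A i j * B i j.
Proof.
rewrite /frobdot /mxtrace exchange_big; apply: eq_bigr => j _.
by rewrite mxE; apply: eq_bigr => i _; rewrite mxE.
Qed.

Lemma frobsqE m n (A : 'M[R]_(m, n)) : frobsq A = \sum_i \sum_j A i j ^+ 2.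
Proof. by rewrite /frobsq frobdotE; under eq_bigr do under eq_bigr do rewrite -expr2. Qed.

Lemma frobsq_ge0 m n (A : 'M[R]_(m, n)) : 0 <= frobsq A.
Proof. by rewrite frobsqE; apply: sumr_ge0 => i _; apply: sumr_ge0 => j _; apply: sqr_ge0. Qed.

Lemma frobdotC m n (A B : 'M[R]_(m, n)) : frobdot A B = frobdot B A.
Proof. by rewrite !frobdotE; under eq_bigr do under eq_bigr do rewrite mulrC. Qed.

Lemma frobdotDr m n (A B C : 'M[R]_(m, n)) :
  frobdot A (B + C) = frobdot A B + frobdot A C.
Proof. by rewrite /frobdot mulmxDr mxtraceD. Qed.

Lemma frobdotZr m n a (A B : 'M[R]_(m, n)) : frobdot A (a *: B) = a * frobdot A B.
Proof. by rewrite /frobdot -scalemxAr mxtraceZ. Qed.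

Lemma frobdotNr m n (A B : 'M[R]_(m, n)) : frobdot A (- B) = - frobdot A B.
Proof. by rewrite -scaleN1r frobdotZr mulN1r. Qed.

Lemma frobdotBr m n (A B C : 'M[R]_(m, n)) :
  frobdot A (B - C) = frobdot A B - frobdot A C.
Proof. by rewrite frobdotDr frobdotNr. Qed.

Lemma frobsqD m n (A B : 'M[R]_(m, n)) :
  frobsq (A + B) = frobsq A + 2 * frobdot A B + frobsq B.
Proof. by rewrite /frobsq frobdotDr ![frobdot (A + B) _]frobdotC !frobdotDr (frobdotC B A); ring. Qed.

Lemma frobsqZ m n a (A : 'M[R]_(m, n)) : frobsq (a *: A) = a ^+ 2 * frobsq A.
Proof. by rewrite /frobsq frobdotZr frobdotC frobdotZr mulrA -expr2. Qed.

Lemma frobsqN m n (A : 'M[R]_(m, n)) : frobsq (- A) = frobsq A.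
Proof. by rewrite -scaleN1r frobsqZ sqrrN expr1n mul1r. Qed.

Lemma frobsq_tr m n (A : 'M[R]_(m, n)) : frobsq A^T = frobsq A.
Proof. by rewrite !frobsqE exchange_big; under eq_bigr do under eq_bigr do rewrite mxE. Qed.

Lemma frobsqD_le m n (A B : 'M[R]_(m, n)) :
  frobsq (A + B) <= 2 * frobsq A + 2 * frobsq B.
Proof.
have := frobsq_ge0 (A - B); rewrite !frobsqD frobsqN frobdotNr; lra.
Qed.

Lemma frobdot_sqr_le m n (A B : 'M[R]_(m, n)) :
  frobdot A B ^+ 2 <= frobsq A * frobsq B.
Proof.
rewrite frobdotE !frobsqE !pair_bigA /=.
exact: (sum_mul_sqr_le (fun k : 'I_m * 'I_n => A k.1 k.2) (fun k => B k.1 k.2)).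
Qed.

Lemma frobsq_mulmx_le m n p (A : 'M[R]_(m, n)) (B : 'M[R]_(n, p)) :
  frobsq (A *m B) <= frobsq A * frobsq B.
Proof.
rewrite !frobsqE [X in _ * X]exchange_big mulr_suml.
apply: ler_sum => i _; rewrite mulr_sumr; apply: ler_sum => j _.
by rewrite mxE; apply: (sum_mul_sqr_le (A i) (B ^~ j)).
Qed.

Lemma mxtrace_sqr_le n (A : 'M[R]_n) : \tr A ^+ 2 <= n%:R * frobsq A.
Proof.
have := sum_mul_sqr_le (fun i : 'I_n => A i i) (fun=> 1).
under eq_bigr do rewrite mulr1.
rewrite expr1n sumr_const card_ord mulrC => /le_trans; apply.
rewrite ler_wpM2l // frobsqE; apply: ler_sum => i _.
by rewrite (bigD1 i) //= lerDl; apply: sumr_ge0 => j _; apply: sqr_ge0.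
Qed.

Lemma frobdot_gram m1 m2 n (U : 'M[R]_(m1, n)) (V : 'M[R]_(m2, n)) :
  frobdot (U^T *m U) (V^T *m V) = frobsq (U *m V^T).
Proof.
rewrite /frobsq /frobdot !trmx_mul !trmxK.
by rewrite [RHS]mxtrace_mulC !mulmxA [RHS]mxtrace_mulC !mulmxA.
Qed.

Lemma frobdot_mulmx_trmxr m n p (E : 'M[R]_(m, n)) (V : 'M[R]_(n, p)) :
  frobdot E (E *m V *m V^T) = frobsq (E *m V).
Proof. by rewrite /frobsq /frobdot mulmxA mxtrace_mulC trmx_mul !mulmxA. Qed.

Lemma frobdot_mulmx_trmxl m n p (E : 'M[R]_(m, n)) (U : 'M[R]_(m, p)) :
  frobdot E (U *m (E^T *m U)^T) = frobsq (E^T *m U).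
Proof. by rewrite /frobsq /frobdot mulmxA mxtrace_mulC mulmxA. Qed.

End FrobeniusInnerProduct.

Section FrobeniusNorm.
Variable R : realType.
Implicit Types (m n p : nat).

Lemma frob_sqrt m n (A : 'M[R]_(m, n)) : frob A = Num.sqrt (frobsq A).
Proof. by rewrite frobsqE. Qed.

Lemma sqr_frob m n (A : 'M[R]_(m, n)) : frob A ^+ 2 = frobsq A.
Proof. by rewrite frob_sqrt sqr_sqrtr // frobsq_ge0. Qed.

Lemma frob_ge0 m n (A : 'M[R]_(m, n)) : 0 <= frob A.
Proof. by rewrite frob_sqrt sqrtr_ge0. Qed.

Lemma frob_le_sqr m n (A : 'M[R]_(m, n)) (y : R) :
  0 <= y -> frobsq A <= y ^+ 2 -> frob A <= y.
Proof. by move=> y0 h; rewrite -ler_sqr ?nnegrE ?frob_ge0 // sqr_frob. Qed.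

Lemma frob0 m n : frob (0 : 'M[R]_(m, n)) = 0.
Proof. by rewrite frob_sqrt /frobsq /frobdot mulmx0 mxtrace0 sqrtr0. Qed.

Lemma frob_tr m n (A : 'M[R]_(m, n)) : frob A^T = frob A.
Proof. by rewrite !frob_sqrt frobsq_tr. Qed.

Lemma frobN m n (A : 'M[R]_(m, n)) : frob (- A) = frob A.
Proof. by rewrite !frob_sqrt frobsqN. Qed.

Lemma frobZ m n a (A : 'M[R]_(m, n)) : frob (a *: A) = `|a| * frob A.
Proof. by rewrite !frob_sqrt frobsqZ sqrtrM ?sqr_ge0 // sqrtr_sqr. Qed.

Lemma ler_frobdot m n (A B : 'M[R]_(m, n)) : `|frobdot A B| <= frob A * frob B.
Proof.
rewrite -ler_sqr ?nnegrE ?mulr_ge0 ?frob_ge0 //.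
by rewrite real_normK ?num_real // exprMn !sqr_frob frobdot_sqr_le.
Qed.

Lemma ler_frobD m n (A B : 'M[R]_(m, n)) : frob (A + B) <= frob A + frob B.
Proof.
apply: frob_le_sqr; first by rewrite addr_ge0 ?frob_ge0.
have /ler_normlP[_ h] := ler_frobdot A B.
by rewrite frobsqD sqrrD !sqr_frob; lra.
Qed.

Lemma ler_frobB m n (A B : 'M[R]_(m, n)) : frob (A - B) <= frob A + frob B.
Proof. by rewrite -(frobN B) ler_frobD. Qed.

Lemma ler_frobM m n p (A : 'M[R]_(m, n)) (B : 'M[R]_(n, p)) :
  frob (A *m B) <= frob A * frob B.
Proof.
apply: frob_le_sqr; first by rewrite mulr_ge0 ?frob_ge0.
by rewrite exprMn !sqr_frob frobsq_mulmx_le.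
Qed.

Lemma frob_gram_le m n (A : 'M[R]_(m, n)) : frob (A^T *m A) <= frobsq A.
Proof. by apply: le_trans (ler_frobM _ _) _; rewrite frob_tr -sqr_frob expr2. Qed.

End FrobeniusNorm.

Lemma le_of_sqr_le (R : realDomainType) (x y : R) : 0 <= y -> x ^+ 2 <= y ^+ 2 -> x <= y.
Proof. by move=> y0 h; nra. Qed.

Section BalancedFactors.
Variable R : realType.
Variables (m1 m2 r : nat) (U : 'M[R]_(m1, r)) (V : 'M[R]_(m2, r)).

Lemma frobsq_le_gram : frobsq U <= Num.sqrt r%:R * frob (U^T *m U).
Proof.
apply: le_of_sqr_le; first by rewrite mulr_ge0 ?sqrtr_ge0 ?frob_ge0.
by rewrite exprMn sqr_sqrtr // sqr_frob; apply: mxtrace_sqr_le.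
Qed.

Lemma frob_gram_le_balanced mu : 0 <= mu ->
  frobsq (U *m V^T) <= 10 * mu ^+ 2 -> frob (U^T *m U - V^T *m V) <= mu ->
  frob (U^T *m U) <= 4 * mu.
Proof.
move=> mu0 hUV hD; set x := frob (U^T *m U).
have x0 : 0 <= x by apply: frob_ge0.
have : x ^+ 2 <= 10 * mu ^+ 2 + x * mu.
  rewrite sqr_frob [X in X <= _]/frobsq.
  rewrite -[X in frobdot _ X](subrKC (V^T *m V)) frobdotDr frobdot_gram.
  have /ler_normlP[_ h] := ler_frobdot (U^T *m U) (U^T *m U - V^T *m V).
  apply: lerD => //; apply: le_trans h _; exact: ler_wpM2l.
nra.
Qed.

Lemma frobsq_balanced_factor_le mu : 0 <= mu ->
  frobsq (U *m V^T) <= 10 * mu ^+ 2 -> frob (U^T *m U - V^T *m V) <= mu ->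
  frobsq U <= 5 * Num.sqrt r%:R * mu.
Proof.
move=> mu0 hUV hD; apply: le_trans frobsq_le_gram _.
have := frob_gram_le_balanced mu0 hUV hD.
have := sqrtr_ge0 (r%:R : R); nra.
Qed.

End BalancedFactors.

Lemma frobsq_balanced_factors_le (R : realType) m1 m2 r
    (U : 'M[R]_(m1, r)) (V : 'M[R]_(m2, r)) mu : 0 <= mu ->
  frobsq (U *m V^T) <= 10 * mu ^+ 2 -> frob (U^T *m U - V^T *m V) <= mu ->
  frobsq U <= 5 * Num.sqrt r%:R * mu /\ frobsq V <= 5 * Num.sqrt r%:R * mu.
Proof.
move=> mu0 hUV hD; split; first exact: frobsq_balanced_factor_le hUV hD.
apply: (frobsq_balanced_factor_le (U := V) (V := U) mu0).
  by rewrite -[V *m U^T]trmxK frobsq_tr trmx_mul trmxK.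
by rewrite -frobN opprB.
Qed.

Lemma trmxBZ (R : pzRingType) m n (a : R) (A B : 'M[R]_(m, n)) :
  (A - a *: B)^T = A^T - a *: B^T.
Proof. by rewrite linearB /= linearZ. Qed.

Section GradientStep.
Variable R : realType.
Variables (d1 d2 r : nat) (M : 'M[R]_(d1, d2)) (U : 'M[R]_(d1, r)) (V : 'M[R]_(d2, r)).

Local Notation E := (U *m V^T - M).
Local Notation GU := (E *m V).
Local Notation GV := (E^T *m U).
Local Notation Lin := (GU *m V^T + U *m GV^T).
Local Notation Quad := (GU *m GV^T).
Local Notation U' eta := (gd_step M eta (U, V)).1.
Local Notation V' eta := (gd_step M eta (U, V)).2.

Lemma gd_step_residual eta :
  U' eta *m (V' eta)^T - M = E - eta *: Lin + eta ^+ 2 *: Quad.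
Proof.
rewrite /= trmxBZ.
rewrite mulmxBl !mulmxBr -!scalemxAl -!scalemxAr scalerA.
move: (U *m V^T) (U *m GV^T) (GU *m V^T) Quad => P1 P2 P3 P4.
by apply/matrixP => i j; rewrite !mxE; ring.
Qed.

Lemma gd_step_imbalance eta :
  (U' eta)^T *m U' eta - (V' eta)^T *m V' eta =
  (U^T *m U - V^T *m V) + eta ^+ 2 *: (GU^T *m GU - GV^T *m GV).
Proof.
have h1 : GV^T *m V = U^T *m GU by rewrite trmx_mul trmxK mulmxA.
have h2 : V^T *m GV = GU^T *m U by rewrite trmx_mul mulmxA.
rewrite /= !trmxBZ; move: GU GV h1 h2 => A B h1 h2.
rewrite !mulmxBl !mulmxBr -!scalemxAl -!scalemxAr !scalerA h1 h2.
move: (U^T *m U) (V^T *m V) (U^T *m A) (A^T *m U) (A^T *m A) (B^T *m B).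
by move=> P1 P2 P3 P4 P5 P6; apply/matrixP => i j; rewrite !mxE; ring.
Qed.

Lemma frobsq_gd_step_residual eta :
  frobsq (U' eta *m (V' eta)^T - M) =
  frobsq E - 2 * eta * (frobsq GU + frobsq GV) + eta ^+ 2 * frobsq Lin
  + eta ^+ 4 * frobsq Quad + 2 * eta ^+ 2 * frobdot E Quad
  - 2 * eta ^+ 3 * frobdot Lin Quad.
Proof.
have descent : frobdot E Lin = frobsq GU + frobsq GV.
  by rewrite frobdotDr frobdot_mulmx_trmxr frobdot_mulmx_trmxl.
rewrite gd_step_residual frobsqD frobdotZr [frobdot (_ - _) _]frobdotC frobdotBr.
rewrite frobdotZr frobsqZ frobsqD frobsqN frobsqZ frobdotNr frobdotZr descent.
by rewrite (frobdotC Quad E) (frobdotC Quad Lin); ring.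
Qed.

Variables (mu K : R).
Hypotheses (hU : frobsq U <= K) (hV : frobsq V <= K) (hE : frobsq E <= 4 * mu ^+ 2).

Lemma frobsq_grad_le : frobsq GU <= 4 * mu ^+ 2 * K /\ frobsq GV <= 4 * mu ^+ 2 * K.
Proof.
split; apply: le_trans (frobsq_mulmx_le _ _) _; rewrite ?frobsq_tr;
  by apply: ler_pM; rewrite ?frobsq_ge0.
Qed.

Lemma frobsq_quad_le : frobsq Quad <= frobsq GU * frobsq GV.
Proof. by apply: le_trans (frobsq_mulmx_le _ _) _; rewrite frobsq_tr. Qed.

Lemma frobsq_lin_le : frobsq Lin <= 2 * K * (frobsq GU + frobsq GV).
Proof.
apply: le_trans (frobsqD_le _ _) _.
have := frobsq_mulmx_le GU V^T; have := frobsq_mulmx_le U GV^T; rewrite !frobsq_tr.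
have := ler_wpM2l (frobsq_ge0 GU) hV; have := ler_wpM2r (frobsq_ge0 GV) hU; lra.
Qed.

Lemma gd_step_imbalance_le eta :
  frob ((U' eta)^T *m U' eta - (V' eta)^T *m V' eta) <=
  frob (U^T *m U - V^T *m V) + eta ^+ 2 * (8 * mu ^+ 2 * K).
Proof.
have [hGU hGV] := frobsq_grad_le.
rewrite gd_step_imbalance; apply: le_trans (ler_frobD _ _) _; rewrite lerD2l.
rewrite frobZ ger0_norm ?sqr_ge0 // ler_wpM2l ?sqr_ge0 //.
apply: le_trans (ler_frobB _ _) _.
have := frob_gram_le GU; have := frob_gram_le GV; lra.
Qed.

Lemma gd_step_loss_le eta : 0 <= mu -> 0 <= eta ->
  eta * K <= 1 / 20 -> eta * mu <= 1 / 100 ->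
  frobsq (U' eta *m (V' eta)^T - M) <= frobsq E.
Proof.
move=> mu0 eta0 etaK etamu; rewrite frobsq_gd_step_residual.
have [hGU hGV] := frobsq_grad_le.
set a := frobsq GU; set b := frobsq GV; set g := a + b.
have a0 : 0 <= a := frobsq_ge0 _.
have b0 : 0 <= b := frobsq_ge0 _.
have K0 : 0 <= K := le_trans (frobsq_ge0 _) hU.
have ab_le : a * b <= g * (4 * mu ^+ 2 * K) by rewrite /g; nra.
have Quad_le : frobsq Quad <= a * b := frobsq_quad_le.
have Lin_le : frobsq Lin <= 2 * K * g := frobsq_lin_le.
have EQuad_le : frobdot E Quad <= mu * g.
  apply: le_of_sqr_le; first by rewrite /g; nra.
  apply: le_trans (frobdot_sqr_le _ _) _.
  apply: le_trans (ler_pM (frobsq_ge0 _) (frobsq_ge0 _) hE Quad_le) _.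
  have := sqr_ge0 (a - b); have := sqr_ge0 mu; rewrite /g; nra.
have g0 : 0 <= g by rewrite addr_ge0.
have LinQuad_ge : - frobdot Lin Quad <= 3 * mu * K * g.
  apply: le_of_sqr_le; first by rewrite !mulr_ge0.
  rewrite sqrrN; apply: le_trans (frobdot_sqr_le _ _) _.
  apply: le_trans (ler_pM (frobsq_ge0 _) (frobsq_ge0 _) Lin_le (le_trans Quad_le ab_le)) _.
  have -> : 2 * K * g * (g * (4 * mu ^+ 2 * K)) = 8 * (mu * K * g) ^+ 2 by ring.
  have -> : (3 * mu * K * g) ^+ 2 = 9 * (mu * K * g) ^+ 2 by ring.
  have := sqr_ge0 (mu * K * g); lra.
set p := eta * K in etaK *; set q := eta * mu in etamu *.
have p0 : 0 <= p by rewrite mulr_ge0.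
have q0 : 0 <= q by rewrite mulr_ge0.
have small : 2 * p + 4 * q ^+ 2 * p + 2 * q + 6 * q * p <= 2 by nra.
have := ler_wpM2l (mulr_ge0 eta0 g0) small.
have -> : eta * g * (2 * p + 4 * q ^+ 2 * p + 2 * q + 6 * q * p) =
  eta ^+ 2 * (2 * K * g) + eta ^+ 4 * (g * (4 * mu ^+ 2 * K))
  + 2 * eta ^+ 2 * (mu * g) + 2 * eta ^+ 3 * (3 * mu * K * g) by rewrite /p /q; ring.
have := ler_wpM2l (exprn_ge0 2 eta0) Lin_le.
have := ler_wpM2l (exprn_ge0 4 eta0) (le_trans Quad_le ab_le).
have := ler_wpM2l (mulr_ge0 (ler0n _ 2) (exprn_ge0 2 eta0)) EQuad_le.
have := ler_wpM2l (mulr_ge0 (ler0n _ 2) (exprn_ge0 3 eta0)) LinQuad_ge.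
rewrite mulrN; lra.
Qed.

End GradientStep.

Section StepSize.
Variable R : realType.
Variables (eps mu rr T : R).

Local Notation eta := (Num.sqrt (eps / rr) / (100 * T * (mu * Num.sqrt mu))).

Lemma step_size_mul_le : 0 < eps -> eps < mu -> 1 <= rr -> 1 <= T ->
  eta * (Num.sqrt rr * mu) <= 1 / 100.
Proof.
move=> eps_gt0 eps_lt_mu rr_ge1 T_ge1.
have mu_gt0 : 0 < mu by lra.
have sqrt_mu_gt0 : 0 < Num.sqrt mu by rewrite sqrtr_gt0.
have num_le : Num.sqrt (eps / rr) * Num.sqrt rr <= Num.sqrt mu.
  rewrite -sqrtrM ?divr_ge0 //; try lra.
  by rewrite mulfVK ?ler_wsqrtr //; lra.
rewrite mulrAC ler_pdivrMr ?mulr_gt0 //; last lra.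
have := ler_wpM2r (ltW mu_gt0) num_le.
have : Num.sqrt mu * mu <= T * (mu * Num.sqrt mu) by rewrite mulrC ler_peMl ?mulr_ge0 //; lra.
lra.
Qed.

Lemma step_size_bounds : 0 < eps -> eps < mu -> 1 <= rr -> 1 <= T ->
  [/\ 0 <= eta, eta * (5 * Num.sqrt rr * mu) <= 1 / 20, eta * mu <= 1 / 100 &
      eta ^+ 2 * (8 * mu ^+ 2 * (5 * Num.sqrt rr * mu)) <= eps / (250 * T ^+ 2)].
Proof.
move=> eps_gt0 eps_lt_mu rr_ge1 T_ge1.
have mu_gt0 : 0 < mu by lra.
have rho_ge1 : 1 <= Num.sqrt rr by rewrite -sqrtr1 ler_wsqrtr.
have eta0 : 0 <= eta by rewrite divr_ge0 ?sqrtr_ge0 // !mulr_ge0 ?sqrtr_ge0 //; lra.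
have := step_size_mul_le eps_gt0 eps_lt_mu rr_ge1 T_ge1; split => //.
- by rewrite -!mulrA mulrCA; lra.
- have : eta * mu <= eta * (Num.sqrt rr * mu) by rewrite ler_wpM2l // ler_peMl //; lra.
  lra.
have -> : eta ^+ 2 * (8 * mu ^+ 2 * (5 * Num.sqrt rr * mu)) =
    eps / (250 * T ^+ 2) / Num.sqrt rr.
  rewrite expr_div_n !exprMn !sqr_sqrtr ?divr_ge0; try lra.
  rewrite -[in eps / rr](sqr_sqrtr (_ : 0 <= rr)); last lra.
  by field; rewrite !gt_eqF //; lra.
rewrite ler_pdivrMr; last lra.
have x0 : 0 <= eps / (250 * T ^+ 2).
  exact: divr_ge0 (ltW eps_gt0) (mulr_ge0 (ler0n _ 250) (sqr_ge0 T)).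
by rewrite ler_peMr.
Qed.
End StepSize.

Lemma imbalance_budget_step (R : realType) (eps T : R) : 0 < eps -> 1 <= T ->
  eps - eps / (4 * T) + eps / (250 * T ^+ 2) <= eps - eps / (4 * (T + 1)).
Proof.
move=> eps_gt0 T_ge1; rewrite -subr_ge0.
have -> : eps - eps / (4 * (T + 1)) - (eps - eps / (4 * T) + eps / (250 * T ^+ 2)) =
    eps * (246 * T - 4) / (1000 * T ^+ 2 * (T + 1)).
  by field; rewrite !gt_eqF //; lra.
have T2 : 0 <= T ^+ 2 := sqr_ge0 T.
apply: divr_ge0; apply: mulr_ge0; try apply: mulr_ge0; lra.
Qed.

Section SmallInitialization.
Variable R : realType.
Variables (d1 d2 r : nat) (M : 'M[R]_(d1, d2)) (eps : R).
Variables (U0 : 'M[R]_(d1, r)) (V0 : 'M[R]_(d2, r)).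

Local Notation mu := (frob M).
Local Notation UV := (gd M (step_size M eps r) U0 V0).
Local Notation K := (5 * Num.sqrt r%:R * mu).

(* Step t adds at most eps / (250 (t+1)^2) to the imbalance, which the shrinking
   slack eps / (4 (t+1)) absorbs. *)
Definition gd_invariant (t : nat) : Prop :=
  frobsq ((UV t).1 *m (UV t).2^T - M) <= 4 * mu ^+ 2 /\
  frob ((UV t).1^T *m (UV t).1 - (UV t).2^T *m (UV t).2) <= eps - eps / (4 * t.+1%:R).

Hypotheses (r_gt0 : (0 < r)%N) (eps_gt0 : 0 < eps) (eps_lt : eps < mu).
Hypotheses (U0_small : frobsq U0 <= eps / 4) (V0_small : frobsq V0 <= eps / 4).

Lemma imbalance_budget_le (t : nat) : eps - eps / (4 * t.+1%:R) <= eps.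
Proof. by rewrite lerBlDr lerDl divr_ge0 ?mulr_ge0 // ltW. Qed.

Lemma gd_invariant_factor_le t : gd_invariant t ->
  frobsq (UV t).1 <= K /\ frobsq (UV t).2 <= K.
Proof.
have mu0 : 0 <= mu := frob_ge0 M.
move=> [hE hD]; apply: frobsq_balanced_factors_le => //.
- have := frobsqD_le ((UV t).1 *m (UV t).2^T - M) M.
  by rewrite subrK -(sqr_frob M); lra.
- by apply: le_trans hD _; apply: le_trans (imbalance_budget_le t) (ltW eps_lt).
Qed.

Lemma gd_invariant0 : gd_invariant 0.
Proof.
have mu_gt0 : 0 < mu := lt_trans eps_gt0 eps_lt.
split=> /=.
- apply: le_trans (frobsqD_le _ _) _; rewrite frobsqN -(sqr_frob M).
  have : frobsq (U0 *m V0^T) <= eps / 4 * (eps / 4).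
    apply: le_trans (frobsq_mulmx_le _ _) _; rewrite frobsq_tr.
    by apply: ler_pM; rewrite ?frobsq_ge0.
  have := eps_gt0; have := eps_lt; nra.
- apply: le_trans (ler_frobB _ _) _.
  have := frob_gram_le U0; have := frob_gram_le V0.
  have := U0_small; have := V0_small; have := eps_gt0; rewrite mulr1n mulr1; lra.
Qed.

Lemma gd_invariant_step t : gd_invariant t ->
  frobsq ((UV t.+1).1 *m (UV t.+1).2^T - M) <= frobsq ((UV t).1 *m (UV t).2^T - M) /\
  gd_invariant t.+1.
Proof.
move=> inv_t; have [hU hV] := gd_invariant_factor_le inv_t.
case: inv_t => hE hD.
have T_ge1 : 1 <= t.+1%:R :> R by rewrite ler1n.
have r_ge1 : 1 <= r%:R :> R by rewrite ler1n.
have [eta0 etaK etamu eta2] := step_size_bounds eps_gt0 eps_lt r_ge1 T_ge1.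
have loss_le := gd_step_loss_le hU hV hE (frob_ge0 M) eta0 etaK etamu.
split => //; split; first exact: le_trans loss_le hE.
apply: le_trans (gd_step_imbalance_le hU hV hE _) _.
apply: le_trans (lerD hD eta2) _.
by rewrite -[t.+2%:R]natr1; apply: imbalance_budget_step.
Qed.

Lemma gd_invariantP t : gd_invariant t.
Proof. by elim: t => [|t /gd_invariant_step []]; [exact: gd_invariant0 |]. Qed.

Lemma gd_small_init :
  fobj M (UV 0).1 (UV 0).2 <= 2 * mu ^+ 2 /\
  forall t : nat,
    frob ((UV t).1^T *m (UV t).1 - (UV t).2^T *m (UV t).2) <= eps /\
    fobj M (UV t.+1).1 (UV t.+1).2 <= fobj M (UV t).1 (UV t).2 /\
    frob (UV t).1 ^+ 2 <= K /\ frob (UV t).2 ^+ 2 <= K.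
Proof.
split=> [|t]; first by have [hE _] := gd_invariantP 0; rewrite /fobj sqr_frob; lra.
have [hE hD] := gd_invariantP t.
have [hU hV] := gd_invariant_factor_le (gd_invariantP t).
have [loss_le _] := gd_invariant_step (gd_invariantP t).
rewrite /fobj !sqr_frob; split; first exact: le_trans hD (imbalance_budget_le t).
by split; first lra.
Qed.

End SmallInitialization.

Section GaussianTail.
Variable R : realType.
Local Notation leb := (@lebesgue_measure R).

Lemma normal_fun0_le1 (b x : R) : normal_fun 0 b x <= 1.
Proof.
rewrite /normal_fun -expR0 ler_expR mulNr oppr_le0.
by rewrite mulr_ge0 ?sqr_ge0 // invr_ge0 mulrn_wge0 // sqr_ge0.
Qed.

Lemma normal_fun0_le_outside (b x : R) : 0 < b -> b < `|x| -> normal_fun 0 b x <= 2 / 3.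
Proof.
move=> b_gt0 b_lt.
have b2_le : b ^+ 2 <= x ^+ 2.
  rewrite -[x ^+ 2]real_normK ?num_real // ler_sqr ?nnegrE ?normr_ge0 ?ltW //.
apply: (@le_trans _ _ (expR (- (1 / 2)))).
  rewrite ler_expR subr0 -mulr_natr mulNr lerN2 invfM mulrA.
  by rewrite ler_pM2r // ler_pdivlMr ?exprn_gt0 // mul1r.
rewrite expRN -[leRHS]invrK lef_pV2 ?posrE ?expR_gt0 //.
have := expR_ge1Dx (1 / 2 : R); lra.
Qed.

(* The product of two centred Gaussian densities is again a Gaussian density. *)
Lemma integral_normal_pdf_fun (s b : R) : 0 < s -> 0 < b ->
  (\int[leb]_x (normal_pdf 0 s x * normal_fun 0 b x)%:E =
   (b / Num.sqrt (s ^+ 2 + b ^+ 2))%:E)%E.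
Proof.
move=> s_gt0 b_gt0.
set u := Num.sqrt (s ^+ 2 + b ^+ 2).
have sb_gt0 : 0 < s ^+ 2 + b ^+ 2 by rewrite addr_gt0 ?exprn_gt0.
have u_gt0 : 0 < u by rewrite sqrtr_gt0.
have u2 : u ^+ 2 = s ^+ 2 + b ^+ 2 by rewrite sqr_sqrtr // ltW.
set sg := s * b / u.
have sg_gt0 : 0 < sg by rewrite !mulr_gt0 ?invr_gt0.
have pdf_fun x : normal_pdf 0 s x * normal_fun 0 b x =
    normal_peak s / normal_peak sg * normal_pdf 0 sg x.
  rewrite !normal_pdfE ?gt_eqF //=.
  have -> : normal_fun 0 sg x = normal_fun 0 s x * normal_fun 0 b x.
    rewrite /normal_fun -expRD; congr expR; rewrite subr0 /sg !exprMn exprVn u2.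
    by field; rewrite !gt_eqF.
  by field; rewrite gt_eqF // normal_peak_gt0 // gt_eqF.
under eq_integral do rewrite pdf_fun EFinM.
rewrite integralZl //; last exact: integrable_normal_pdf.
rewrite integral_normal_pdf mule1 /normal_peak; congr EFin.
have -> : sg ^+ 2 * pi *+ 2 = (b / u) ^+ 2 * (s ^+ 2 * pi *+ 2) by rewrite /sg; ring.
rewrite sqrtrM ?sqr_ge0 // sqrtr_sqr ger0_norm ?divr_ge0 ?ltW //.
have : 0 < Num.sqrt (s ^+ 2 * pi *+ 2).
  by rewrite sqrtr_gt0 mulrn_wgt0 // mulr_gt0 ?exprn_gt0 ?pi_gt0.
by move=> h; field; rewrite !gt_eqF // divr_gt0.
Qed.

Lemma normal_pdf_fun_le (s b x : R) : 0 < b ->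
  normal_pdf 0 s x * normal_fun 0 b x <=
  1 / 3 * (\1_(`[(- b)%R, b]%classic) x * normal_pdf 0 s x) + 2 / 3 * normal_pdf 0 s x.
Proof.
move=> b_gt0; rewrite indicE; have := normal_pdf_ge0 0 s x.
have [xB|xB] := boolP (x \in `[(- b)%R, b]%classic).
  by rewrite mulr1n mul1r; have := normal_fun0_le1 b x; nra.
have bx : b < `|x|.
  by rewrite ltNge ler_norml; apply: contra xB => bx; apply/mem_set; rewrite /= in_itv.
by rewrite mulr0n mul0r; have := normal_fun0_le_outside b_gt0 bx; nra.
Qed.

Lemma normal_prob_itv_integral_ge (s b : R) : 0 < s -> 0 < b ->
  ((b / Num.sqrt (s ^+ 2 + b ^+ 2))%:E <=
   (1 / 3)%:E * normal_prob 0 s `[(- b)%R, b] + (2 / 3)%:E)%E.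
Proof.
move=> s_gt0 b_gt0; set B := `[(- b)%R, b]%classic.
have mB : measurable B := measurable_itv _.
have mpdf : measurable_fun setT (normal_pdf 0 s) := measurable_normal_pdf 0 s.
have mB_pdf : measurable_fun setT (fun x => 1 / 3 * (\1_B x * normal_pdf 0 s x)).
  by apply: measurable_funM => //; apply: measurable_funM => //; exact: measurable_indic.
have m23_pdf : measurable_fun setT (fun x => 2 / 3 * normal_pdf 0 s x).
  exact: measurable_funM.
have B_pdf_ge0 x : (0 <= (1 / 3 * (\1_B x * normal_pdf 0 s x))%:E)%E.
  by rewrite lee_fin !mulr_ge0 ?normal_pdf_ge0 // indicE.
have pdf23_ge0 x : (0 <= (2 / 3 * normal_pdf 0 s x)%:E)%E.
  by rewrite lee_fin mulr_ge0 ?normal_pdf_ge0.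
rewrite -integral_normal_pdf_fun //.
apply: (@le_trans _ _ (\int[leb]_x ((1 / 3 * (\1_B x * normal_pdf 0 s x))%:E
                                  + (2 / 3 * normal_pdf 0 s x)%:E))%E).
  apply: ge0_le_integral => //.
  - by move=> x _; rewrite lee_fin mulr_ge0 ?normal_pdf_ge0 ?normal_fun_ge0.
  - by apply/measurable_EFinP; apply: measurable_funM => //; exact: measurable_normal_fun.
  - by apply: emeasurable_funD; apply/measurable_EFinP.
  by move=> x _; rewrite -EFinD lee_fin normal_pdf_fun_le.
have B_pdfE : (\int[leb]_x (\1_B x * normal_pdf 0 s x)%:E = normal_prob 0 s B)%E.
  rewrite /normal_prob [RHS]integral_mkcond; apply: eq_integral => x _.
  by rewrite /patch indicE; case: ifP => _; rewrite ?mul1r ?mul0r.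
rewrite ge0_integralD //; try exact/measurable_EFinP.
under eq_integral do rewrite EFinM.
rewrite ge0_integralZl_EFin //; first last.
- by apply/measurable_EFinP; apply: measurable_funM => //; exact: measurable_indic.
- by move=> x _; rewrite lee_fin mulr_ge0 ?normal_pdf_ge0 // indicE.
under [X in (_ + X)%E]eq_integral do rewrite EFinM.
rewrite ge0_integralZl_EFin //; first last.
- exact/measurable_EFinP.
- by move=> x _; rewrite lee_fin normal_pdf_ge0.
by rewrite integral_normal_pdf mule1 B_pdfE.
Qed.

Lemma one_sub_tail_le (s b : R) : 0 < s -> 0 < b ->
  1 - 2 * (s ^+ 2 / b ^+ 2) <= 3 * (b / Num.sqrt (s ^+ 2 + b ^+ 2)) - 2.
Proof.
move=> s_gt0 b_gt0; set u := Num.sqrt (s ^+ 2 + b ^+ 2).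
have u2 : u ^+ 2 = s ^+ 2 + b ^+ 2 by rewrite sqr_sqrtr // addr_ge0 ?sqr_ge0.
have b_le_u : b <= u.
  rewrite -ler_sqr ?nnegrE ?sqrtr_ge0 ?(ltW b_gt0) // u2.
  by have := sqr_ge0 s; lra.
have u_gt0 : 0 < u := lt_le_trans b_gt0 b_le_u.
rewrite -subr_ge0.
have -> : 3 * (b / u) - 2 - (1 - 2 * (s ^+ 2 / b ^+ 2)) =
    (2 * s ^+ 2 * u - 3 * (u - b) * b ^+ 2) / (b ^+ 2 * u).
  by field; rewrite !gt_eqF.
apply: divr_ge0; last by rewrite mulr_ge0 ?sqr_ge0 ?ltW.
have -> : 2 * s ^+ 2 * u - 3 * (u - b) * b ^+ 2 =
    (u - b) * (2 * (u + b) * u - 3 * b ^+ 2).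
  by rewrite -[s ^+ 2](addrK (b ^+ 2)) -u2; ring.
by rewrite mulr_ge0 ?subr_ge0 //; nra.
Qed.

Lemma normal_prob_itv_ge (s b : R) : 0 < s -> 0 < b ->
  ((1 - 2 * (s ^+ 2 / b ^+ 2))%:E <= normal_prob 0 s `[(- b)%R, b])%E.
Proof.
move=> s_gt0 b_gt0.
have : (0 <= normal_prob 0 s `[(- b)%R, b])%E := measure_ge0 _ _.
have := normal_prob_itv_integral_ge s_gt0 b_gt0.
case: (normal_prob 0 s _) => [p | | ] int_le p_ge0.
- have := one_sub_tail_le s_gt0 b_gt0.
  by rewrite -EFinM -EFinD !lee_fin in int_le *; lra.
- by rewrite leey.
- by rewrite leeNy_eq in p_ge0.
Qed.

End GaussianTail.

Lemma bernoulli_ineq (R : realDomainType) (x : R) (n : nat) :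
  -1 <= x -> 1 + n%:R * x <= (1 + x) ^+ n.
Proof.
move=> x_ge; elim: n => [|n IHn]; first by rewrite mul0r addr0 expr0.
rewrite exprS -natr1.
have x1 : 0 <= 1 + x by lra.
have := ler_wpM2l x1 IHn.
have := mulr_ge0 (ler0n R n) (sqr_ge0 x); nra.
Qed.

Lemma iid_normal_bigcap_itv (R : realType) (dT : measure_display)
    (T : measurableType dT) (P : probability T R) (I : finType)
    (X : I -> T -> R) (s b : R) :
  0 < s -> 0 < b -> iid_normal P X s ->
  let A := \bigcap_(k in [set: I]) X k @^-1` `[(- b)%R, b] in
  measurable A /\ ((1 - #|I|%:R * (2 * (s ^+ 2 / b ^+ 2)))%:E <= P A)%E.
Proof.
move=> s_gt0 b_gt0 [mX [lawX indepX]] A.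
have mB : measurable `[(- b)%R, b]%classic := measurable_itv _.
split.
  apply: fin_bigcap_measurable; first exact: finite_finset.
  by move=> k _; rewrite -[X in measurable X]setTI; apply: mX.
rewrite /A (indepX (fun=> `[(- b)%R, b]%classic)) // (eq_bigr _ (fun k _ => lawX k _ mB)).
have : (normal_prob 0 s `[(- b)%R, b] <= 1)%E := probability_le1 (normal_prob 0 s) mB.
have : (0 <= normal_prob 0 s `[(- b)%R, b])%E := measure_ge0 _ _.
have := normal_prob_itv_ge s_gt0 b_gt0.
case: (normal_prob 0 s _) => [p | | ] // tail_le p_ge0 p_le1.
rewrite prodEFin prodr_const lee_fin; rewrite !lee_fin in tail_le p_ge0.
have p_ge : -1 <= p - 1 by lra.
have := bernoulli_ineq #|I| p_ge; rewrite subrKC mulrBr mulr1.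
have := ler_wpM2l (ler0n R #|I|) tail_le; rewrite mulrBr mulr1; lra.
Qed.

Lemma frobsq_le_entries (R : realType) m n D (A : 'M[R]_(m, n)) (b : R) :
  (m <= D)%N -> (n <= D)%N -> (forall i j, `|A i j| <= b) ->
  frobsq A <= D%:R ^+ 2 * b ^+ 2.
Proof.
move=> m_le n_le A_le; rewrite frobsqE.
apply: (@le_trans _ _ (\sum_(i < m) \sum_(j < n) b ^+ 2)).
  apply: ler_sum => i _; apply: ler_sum => j _.
  by rewrite -real_normK ?num_real // lerXn2r ?nnegrE ?(le_trans (normr_ge0 _) (A_le i j)).
rewrite !sumr_const !card_ord -mulrnA -[b ^+ 2 *+ _]mulr_natl ler_wpM2r ?sqr_ge0 //.
by rewrite -natrX ler_nat expnS expn1 mulnC; apply: leq_mul.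
Qed.

Lemma mxrank_gt0 (R : realType) m n (M : 'M[R]_(m, n)) : 0 < frob M -> (0 < \rank M)%N.
Proof. by rewrite lt0n mxrank_eq0; apply: contraTneq => ->; rewrite frob0 ltxx. Qed.

Lemma card_factor_entries_le (R : numDomainType) d1 d2 r D :
  (d1 <= D)%N -> (d2 <= D)%N -> (r <= D)%N ->
  #|{: 'I_d1 * 'I_r + 'I_d2 * 'I_r}|%:R <= 2 * D%:R ^+ 2 :> R.
Proof.
move=> d1_le d2_le r_le; rewrite card_sum !card_prod !card_ord -natrX -natrM ler_nat.
by rewrite mul2n -addnn expnS expn1 leq_add ?leq_mul.
Qed.

Lemma init_failure_le (R : realType) (delta eps s D : R) (N C : nat) :
  0 < delta -> 0 < eps -> 0 < D -> 16 / delta < C%:R -> N%:R <= 2 * D ^+ 2 ->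
  s ^+ 2 <= eps / (C.+1%:R * D ^+ 4) ->
  N%:R * (2 * (s ^+ 2 / (eps / (4 * D ^+ 2)))) <= delta.
Proof.
move=> delta_gt0 eps_gt0 D_gt0 C_gt N_le s_le.
have D4 : 0 < D ^+ 4 by rewrite exprn_gt0.
rewrite ler_pdivlMr ?mulr_gt0 // in s_le.
have {}C_gt : 16 <= delta * C.+1%:R.
  by rewrite ltr_pdivrMr // in C_gt; rewrite -natr1; nra.
have -> : N%:R * (2 * (s ^+ 2 / (eps / (4 * D ^+ 2)))) = 8 * N%:R * D ^+ 2 * s ^+ 2 / eps.
  by field; rewrite !gt_eqF.
rewrite ler_pdivrMr //.
have s2 := sqr_ge0 s; have D2 := sqr_ge0 D.
have : 8 * N%:R * D ^+ 2 * s ^+ 2 <= 16 * (D ^+ 4 * s ^+ 2).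
  have -> : D ^+ 4 = D ^+ 2 * D ^+ 2 by rewrite -exprD.
  have := ler_wpM2r (mulr_ge0 D2 s2) N_le; lra.
have := ler_wpM2r (mulr_ge0 (ltW D4) s2) C_gt; nra.
Qed.

Theorem lemma3p1 (R : realType) (delta : R) (hdelta0 : 0 < delta)
  (hdelta1 : delta < 1) :
  exists C k : nat,
  forall (d1 d2 r : nat) (M : 'M[R]_(d1, d2)) (eps : R),
  \rank M = r -> 0 < eps -> eps < frob M ->
  forall (dT : measure_display) (T : measurableType dT) (P : probability T R)
    (U0 : T -> 'M[R]_(d1, r)) (V0 : T -> 'M[R]_(d2, r)) (s : R),
  0 < s -> s ^+ 2 <= eps / ((C.+1)%:R * (maxn d1 d2)%:R ^+ k) ->
  iid_normal P (init_entries U0 V0) s ->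
  exists A : set T, measurable A /\ ((1 - delta)%:E <= P A)%E /\
  forall w, A w ->
    let UV := gd M (step_size M eps r) (U0 w) (V0 w) in
    fobj M (UV 0).1 (UV 0).2 <= 2 * frob M ^+ 2 /\
    forall t : nat,
      frob ((UV t).1^T *m (UV t).1 - (UV t).2^T *m (UV t).2) <= eps /\
      fobj M (UV t.+1).1 (UV t.+1).2 <= fobj M (UV t).1 (UV t).2 /\
      frob (UV t).1 ^+ 2 <= 5 * Num.sqrt r%:R * frob M /\
      frob (UV t).2 ^+ 2 <= 5 * Num.sqrt r%:R * frob M.
Proof.
have [C C_gt] : exists C : nat, 16 / delta < C%:R.
  by exists (Num.bound (16 / delta)); rewrite archi_boundP // divr_ge0 // ltW.
exists C, 4%N => d1 d2 r M eps rkM eps_gt0 eps_lt dT T P U0 V0 s s_gt0 s_le iidX.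
have r_gt0 : (0 < r)%N by rewrite -rkM mxrank_gt0 // (lt_trans eps_gt0 eps_lt).
set D := maxn d1 d2.
have [d1_le d2_le] : (d1 <= D)%N /\ (d2 <= D)%N by rewrite leq_maxl leq_maxr.
have r_le : (r <= D)%N by rewrite -rkM (leq_trans (rank_leq_row M)).
have D_gt0 : 0 < D%:R :> R by rewrite ltr0n (leq_trans r_gt0 r_le).
set b := Num.sqrt (eps / (4 * D%:R ^+ 2)).
have b2 : b ^+ 2 = eps / (4 * D%:R ^+ 2) by rewrite sqr_sqrtr // divr_ge0 ?mulr_ge0 ?ltW.
have b_gt0 : 0 < b by rewrite sqrtr_gt0 divr_gt0 ?mulr_gt0 ?exprn_gt0.
have [mA PA] := iid_normal_bigcap_itv s_gt0 b_gt0 iidX.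
eexists; split; [exact: mA | split].
  apply: le_trans PA; rewrite lee_fin lerD2l lerN2 b2.
  by apply: (init_failure_le (C := C)) => //; apply: card_factor_entries_le.
move=> w Aw; have entry_le k : `|init_entries U0 V0 k w| <= b.
  by have := Aw k I; rewrite /= in_itv /= -ler_norml.
have quarter : D%:R ^+ 2 * b ^+ 2 = eps / 4 by rewrite b2; field; rewrite gt_eqF.
apply: gd_small_init => //; rewrite -quarter; apply: frobsq_le_entries r_le _ => // i j.
- exact: (entry_le (inl (i, j))).
- exact: (entry_le (inr (i, j))).
Qed.
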